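(* Let $\mathcal{M}'$ be an RRSF mechanism with respect to coefficients $\mathbf{W}=\{W^k_{i,j}\}_{k\in[n],i,j\in[m_k]}$, with parameters $(q^*,\mu^*,\pi^* )$, i.e. for each agent $k$, $q^*$ is an optimal solution of $(P^3)$ with coefficients $W^k$ and $(\mu^*,\pi^* )$ together with some $\lambda^*$ satisfy the KKT conditions of $(P^3)$ at $q^*$. Then for every agent $k$ and $i\in[m_k]$, $\sum_{j\in[m_k]}q^*_{i,j}W^k_{i,j}-\hat p_k(t_k^{(i)})\ge0$.
   Context: Agent $k$ has type support $\{t_k^{(1)},\dots,t_k^{(m_k)}\}$ with probabilities $F_i>0$; coefficients $W^k_{i,j}\in[-1,1]$. With $\gamma>0$, $\phi(\mathbf{q})=\frac12\gamma\|\mathbf{q}\|_2^2$; $(P^3)$: maximize $\sum_iF_i(\sum_jW_{i,j}q_{i,j}-\phi(\mathbf{q}_i))$ s.t. $\sum_jq_{i,j}=1$ ($\forall i$), $\sum_iF_iq_{i,j}=F_j$ ($\forall j$), $q_{i,j}\ge0$. KKT conditions: $F_i(W_{i,j}-\partial\phi(\mathbf{q}^*_i)/\partial q_{i,j})=\lambda^*_{i,j}+\mu^*_i+F_i\pi^*_j$, $\lambda^*_{i,j}\le0$, $\lambda^*_{i,j}q^*_{i,j}=0$ for all $i,j$. In the RRSF mechanism, agent $k$ reporting $t_k^{(i)}$ is represented by surrogate $t_k^{(j)}$ with probability $q^*_{i,j}$ in an underlying mechanism and additionally pays $\hat p_k(t_k^{(i)})=\sum_j\pi^*_jq^*_{i,j}+\phi(\mathbf{q}^*_i)-\phi(\mathbf{0})+\min_\ell\mu^*_\ell/F_\ell$.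 *)

From HB Require Import structures.
From mathcomp Require Import all_boot all_order all_algebra.
From mathcomp Require Import reals.
Set Implicit Arguments. Unset Strict Implicit. Unset Printing Implicit Defensive.
Import Order.TTheory GRing.Theory Num.Theory.
Local Open Scope ring_scope.

Section RRSF.
Variable R : realType.

Definition phi (gamma : R) (m : nat) (x : 'I_m -> R) : R :=
  2^-1 * gamma * \sum_(j < m) (x j) ^+ 2.

Definition P3_obj (gamma : R) (m : nat) (F : 'I_m -> R) (W q : 'M[R]_m) : R :=
  \sum_(i < m) F i * (\sum_(j < m) W i j * q i j - phi gamma (fun j => q i j)).

Definition P3_feasible (m : nat) (F : 'I_m -> R) (q : 'M[R]_m) : Prop :=
  (forall i, \sum_(j < m) q i j = 1) /\
  (forall j, \sum_(i < m) F i * q i j = F j) /\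
  (forall i j, 0 <= q i j).

Definition P3_optimal (gamma : R) (m : nat) (F : 'I_m -> R) (W q : 'M[R]_m) : Prop :=
  P3_feasible F q /\
  forall q' : 'M[R]_m, P3_feasible F q' -> P3_obj gamma F W q' <= P3_obj gamma F W q.

(* KKT conditions of (P^3) at q, with multipliers lambda, mu, pi.
   Here d phi(q_i)/d q_{i,j} = gamma * q_{i,j}. *)
Definition P3_KKT (gamma : R) (m : nat) (F : 'I_m -> R) (W q lam : 'M[R]_m)
    (mu pi : 'I_m -> R) : Prop :=
  forall i j,
    F i * (W i j - gamma * q i j) = lam i j + mu i + F i * pi j /\
    lam i j <= 0 /\ lam i j * q i j = 0.

(* min_l f l over the nonempty index set 'I_m (i witnesses nonemptiness;
   the value does not depend on i) *)
Definition min_over (m : nat) (f : 'I_m -> R) (i : 'I_m) : R :=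
  \big[Num.min/f i]_(l < m) f l.

Definition RRSF_payment (gamma : R) (m : nat) (F : 'I_m -> R) (q : 'M[R]_m)
    (mu pi : 'I_m -> R) (i : 'I_m) : R :=
  \sum_(j < m) pi j * q i j + phi gamma (fun j => q i j)
  - phi gamma (fun _ : 'I_m => 0) + min_over (fun l => mu l / F l) i.

End RRSF.

(* Multiplying the stationarity condition of the KKT system by q_ij and using
   complementary slackness lambda_ij q_ij = 0, then summing over j with
   sum_j q_ij = 1, shows that the expected surplus of type i over the prices is
   sum_j q_ij (W_ij - pi_j) = gamma ||q_i||^2 + mu_i / F_i = 2 phi(q_i) + mu_i / F_i.
   The payment charges only phi(q_i) (as phi(0) = 0) plus min_l mu_l / F_l,
   so the utility is phi(q_i) + (mu_i / F_i - min_l mu_l / F_l) >= 0. *)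
From HB Require Import structures.
From mathcomp Require Import all_boot all_order all_algebra.
From mathcomp Require Import reals.
From mathcomp Require Import ring.
Set Implicit Arguments. Unset Strict Implicit. Unset Printing Implicit Defensive.
Import Order.TTheory GRing.Theory Num.Theory.
Local Open Scope ring_scope.

Section RRSFUtility.
Variables (R : realType) (gamma : R) (m : nat).

Lemma phi_const0 : phi gamma (fun _ : 'I_m => 0) = 0.
Proof. by rewrite /phi big1 ?mulr0 // => j _; rewrite expr0n. Qed.

Lemma phi_ge0 (x : 'I_m -> R) : 0 <= gamma -> 0 <= phi gamma x.
Proof.
move=> gamma_ge0; rewrite /phi mulr_ge0 ?sumr_ge0 // => [|j _]; last exact: sqr_ge0.
by rewrite mulr_ge0 // invr_ge0.
Qed.

Lemma min_over_le (f : 'I_m -> R) (i l : 'I_m) : min_over f i <= f l.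
Proof. by rewrite /min_over (bigD1 l) //= ge_min lexx. Qed.

Variables (F : 'I_m -> R) (W q lam : 'M[R]_m) (mu pi : 'I_m -> R).
Hypothesis kkt : P3_KKT gamma F W q lam mu pi.

Lemma P3_KKT_mulq (i j : 'I_m) : F i != 0 ->
  q i j * (W i j - pi j) = gamma * q i j ^+ 2 + q i j * (mu i / F i).
Proof.
move=> Fi_neq0; have [stationary [_ slack]] := kkt i j.
have weighted : q i j * mu i = F i * (q i j * (W i j - gamma * q i j - pi j)).
  transitivity (q i j * (F i * (W i j - gamma * q i j)) - F i * pi j * q i j); last by ring.
  by rewrite stationary !mulrDr (mulrC (q i j) (lam i j)) slack; ring.
by rewrite mulrA weighted; field.
Qed.

Lemma P3_KKT_row_surplus (i : 'I_m) : F i != 0 -> \sum_(j < m) q i j = 1 ->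
  \sum_(j < m) q i j * (W i j - pi j) = 2%:R * phi gamma (fun j => q i j) + mu i / F i.
Proof.
move=> Fi_neq0 row_sum.
rewrite (eq_bigr _ (fun j _ => P3_KKT_mulq j Fi_neq0)) big_split /=.
rewrite -mulr_sumr -mulr_suml row_sum mul1r /phi.
by rewrite !mulrA mulfV ?pnatr_eq0 // mul1r.
Qed.

Lemma RRSF_utilityE (i : 'I_m) : F i != 0 -> \sum_(j < m) q i j = 1 ->
  \sum_(j < m) q i j * W i j - RRSF_payment gamma F q mu pi i
  = phi gamma (fun j => q i j) + (mu i / F i - min_over (fun l => mu l / F l) i).
Proof.
move=> Fi_neq0 row_sum.
have surplus := P3_KKT_row_surplus Fi_neq0 row_sum.
rewrite -[\sum_(j < m) q i j * W i j](subrK (\sum_(j < m) pi j * q i j)).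
rewrite -sumrB (eq_bigr (fun j => q i j * (W i j - pi j))) => [|j _]; last by ring.
rewrite surplus /RRSF_payment phi_const0; ring.
Qed.

End RRSFUtility.

Theorem mainTheorem14 (R : realType) (gamma : R) (n : nat) (m : 'I_n -> nat)
    (F : forall k : 'I_n, 'I_(m k) -> R)
    (W : forall k : 'I_n, 'M[R]_(m k))
    (q lam : forall k : 'I_n, 'M[R]_(m k))
    (mu pi : forall k : 'I_n, 'I_(m k) -> R) :
  0 < gamma ->
  (forall k i, 0 < F k i) ->
  (forall k, \sum_(i < m k) F k i = 1) ->
  (forall k i j, -1 <= W k i j <= 1) ->
  (forall k, P3_optimal gamma (F k) (W k) (q k)) ->
  (forall k, P3_KKT gamma (F k) (W k) (q k) (lam k) (mu k) (pi k)) ->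
  forall (k : 'I_n) (i : 'I_(m k)),
    0 <= \sum_(j < m k) q k i j * W k i j
         - RRSF_payment gamma (F k) (q k) (mu k) (pi k) i.
Proof.
move=> gamma_gt0 F_gt0 _ _ opt kkt k i.
have [[row_sum _] _] := opt k.
rewrite (RRSF_utilityE (kkt k)) ?gt_eqF //.
apply: addr_ge0; first exact/phi_ge0/ltW.
by rewrite subr_ge0 min_over_le.
Qed.
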